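(* Let $(X,d)$, $(\Lambda,d_\Lambda)$ be compact metric spaces, $\tau:\Lambda\times X\to X$ continuous and $q:X\to\mathcal P(\Lambda)$ continuous. Assume: (W1) each $\tau_\lambda$ is $1$-Lipschitz on $X$; (MP1) there are $s>0$ and an integer $M\ge1$ such that $\int_{\Lambda^M}|f(\tau_{\lambda^M}(x))-f(\tau_{\lambda^M}(y))|\,dP^q_{M,x}(\lambda^M)\le s\,d(x,y)$ for all $x,y\in X$ and all $f\in\mathrm{Lip}_1(X)$; (H2) there is $r\ge0$ with $d(\tau(\lambda_1,x),\tau(\lambda_2,x))\le r\,d_\Lambda(\lambda_1,\lambda_2)$ for all $\lambda_1,\lambda_2$, $x$; (H3) there is $t\ge0$ with $d_{MK}(q_x,q_y)\le t\,d(x,y)$ for all $x,y\in X$. Then there exists $c>0$ such that for every $f\in\mathrm{Lip}_1(X)$, the function $B_q^M(f)$ is $c$-Lipschitz on $X$.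
   Context: $\mathcal{P}(Y)$ is the set of Borel probability measures on a compact metric space $Y$, with $d_{MK}(\mu,\nu)=\sup_{f\in \mathrm{Lip}_1(Y)}\{\int f\,d\mu-\int f\,d\nu\}$, $\mathrm{Lip}_1(Y)$ the real $1$-Lipschitz functions on $Y$. $\tau_\lambda(x)=\tau(\lambda,x)$; for $\lambda^j=(\lambda_0,\dots,\lambda_{j-1})$, $\tau_{\lambda^j}=\tau_{\lambda_{j-1}}\circ\cdots\circ\tau_{\lambda_0}$. $P^q_{M,x}\in\mathcal P(\Lambda^M)$ is given by $dP^q_{M,x}(\lambda_0,\dots,\lambda_{M-1})=dq_{\tau_{\lambda^{M-1}}(x)}(\lambda_{M-1})\cdots dq_{\tau_{\lambda^1}(x)}(\lambda_1)\,dq_x(\lambda_0)$. The transfer operator is $B_q(f)(x)=\int_\Lambda f(\tau(\lambda,x))\,dq_x(\lambda)$, and $B_q^M$ is its $M$-th iterate, so $B_q^M(f)(x)=\int_{\Lambda^M}f(\tau_{\lambda^M}(x))\,dP^q_{M,x}(\lambda^M)$. *)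

From HB Require Import structures.
From mathcomp Require Import all_boot all_order all_algebra.
From mathcomp Require Import all_classical all_reals all_analysis.
Set Implicit Arguments. Unset Strict Implicit. Unset Printing Implicit Defensive.
Import Order.TTheory GRing.Theory Num.Theory.
Local Open Scope classical_set_scope.
Local Open Scope ring_scope.

Section Defs.
Context {R : realType}.

Definition is_metric (T : Type) (d : T -> T -> R) : Prop :=
  (forall x y, 0 <= d x y) /\ (forall x y, d x y = 0 <-> x = y) /\
  (forall x y, d x y = d y x) /\ (forall x y z, d x z <= d x y + d y z).

(* sequential compactness (equivalent to compactness for metric spaces) *)
Definition metric_compact (T : Type) (d : T -> T -> R) : Prop :=
  forall u : nat -> T, exists (phi : nat -> nat) (l : T),
    (forall n m, (n < m)%N -> (phi n < phi m)%N) /\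
    (fun n => d (u (phi n)) l) @ \oo --> 0.

Definition metric_open (T : Type) (d : T -> T -> R) (A : set T) : Prop :=
  forall x, A x -> exists2 e, 0 < e & forall y, d x y < e -> A y.

Definition metric_continuous (S T : Type) (dS : S -> S -> R) (dT : T -> T -> R)
  (f : S -> T) : Prop :=
  forall x e, 0 < e -> exists2 del, 0 < del & forall y, dS x y < del -> dT (f x) (f y) < e.

Definition jointly_continuous (L X : Type) (dL : L -> L -> R) (d : X -> X -> R)
  (tau : L -> X -> X) : Prop :=
  forall l x e, 0 < e -> exists2 del, 0 < del & forall l' x',
    dL l l' < del -> d x x' < del -> d (tau l x) (tau l' x') < e.

Definition Lip1 (T : Type) (d : T -> T -> R) (f : T -> R) : Prop :=
  forall a b, `|f a - f b| <= d a b.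

Definition lipschitz_with (T : Type) (d : T -> T -> R) (c : R) (f : T -> R) : Prop :=
  forall a b, `|f a - f b| <= c * d a b.

Definition borel_for (dm : measure_display) (L : measurableType dm) (dL : L -> L -> R) : Prop :=
  @measurable _ L = <<s [set A | metric_open dL A] >>.

(* continuity of q : X -> P(Lambda) for the weak topology *)
Definition weakly_continuous (dm : measure_display) (L : measurableType dm)
  (dL : L -> L -> R) (X : Type) (d : X -> X -> R) (q : X -> probability L R) : Prop :=
  forall g : L -> R, metric_continuous dL (fun a b : R => `|a - b|) g ->
    (exists C, forall l, `|g l| <= C) ->
    metric_continuous d (fun a b : R => `|a - b|)
      (fun x => fine (\int[q x]_l (g l)%:E)%E).

Definition Bq (dm : measure_display) (L : measurableType dm) (X : Type)
  (tau : L -> X -> X) (q : X -> probability L R) (f : X -> R) : X -> R :=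
  fun x => fine (\int[q x]_l (f (tau l x))%:E)%E.

(* One step of the integral against P^q_{M,x} of a function of the pair of
   trajectories (tau_{lambda^M}(x), tau_{lambda^M}(y)):
   Cq F x y = int F(tau(lambda,x), tau(lambda,y)) dq_x(lambda).
   Iterating M times gives, by the definition of P^q_{M,x} as the product of
   the conditional measures dq_{tau_{lambda^j}(x)}(lambda_j),
   iter M Cq F x y = int_{Lambda^M} F(tau_{lambda^M} x, tau_{lambda^M} y) dP^q_{M,x}. *)
Definition Cq (dm : measure_display) (L : measurableType dm) (X : Type)
  (tau : L -> X -> X) (q : X -> probability L R) (F : X -> X -> \bar R) : X -> X -> \bar R :=
  fun x y => (\int[q x]_l F (tau l x) (tau l y))%E.

End Defs.

From HB Require Import structures.
From mathcomp Require Import all_boot all_order all_algebra.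
From mathcomp Require Import all_classical all_reals all_analysis.
From mathcomp Require Import measurable_realfun.
From mathcomp Require Import ring lra.
Import Order.TTheory GRing.Theory Num.Theory.
Local Open Scope classical_set_scope.
Local Open Scope ring_scope.

(* B_q worsens Lipschitz constants by at most a fixed factor. For a K-Lipschitz g,
   B_q g(x) - B_q g(y) splits into  int (g(tau_l x) - g(tau_l y)) dq_x,  at most K d(x,y)
   by (W1), and  int g(tau_l y) dq_x - int g(tau_l y) dq_y,  where l |-> g(tau_l y) is
   K r-Lipschitz by (H2), so (H3) applied to its rescaling bounds it by K r t d(x,y); the
   constant K (r + 1) is used instead of K r because the rescaling needs it positive.
   Iterating, B_q^M f is (1 + (r + 1) t)^M-Lipschitz. Lipschitz functions on the compact space Lambda are bounded and Borel,
   hence integrable against every q_x. *)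

Lemma metric_compact_bounded {R : realType} {T : Type} {d : T -> T -> R} :
  is_metric d -> metric_compact d -> exists B, forall a b, d a b <= B.
Proof.
move=> [d_ge0 [_ [d_sym d_tri]]] d_cpt.
have [[x0 _]|T0] := pselect (exists _ : T, True); last first.
  by exists 0 => a; exfalso; apply: T0; exists a.
suff [C dC] : exists C, forall a, d x0 a <= C.
  by exists (C + C) => a b; apply: le_trans (d_tri a x0 b) _; rewrite d_sym lerD.
apply/not_existsP => unbounded.
have /choice [u far] : forall n : nat, exists a, n%:R < d x0 a.
  by move=> n; have /existsNP [a /negP] := unbounded n%:R; rewrite -ltNge; exists a.
have [phi [l [phi_incr /cvgrPdist_lt /(_ 1 ltr01) [N _ near_l]]]] := d_cpt u.
pose n := maxn N (Num.truncn (d x0 l + 1)).+1.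
have := near_l n (leq_maxl _ _); rewrite /= sub0r normrN ger0_norm ?d_ge0 // => dl.
have := far (phi n).
have : n%:R <= (phi n)%:R :> R.
  by rewrite ler_nat unstable.mono_leq_infl //; exact: leq_mono.
have : d x0 (u (phi n)) <= d x0 l + d (u (phi n)) l by rewrite (d_sym (u _)).
have : d x0 l + 1 < n%:R by apply: lt_le_trans (truncnS_gt _) _; rewrite ler_nat leq_maxr.
lra.
Qed.

Lemma EFin_Rintegral {R : realType} {dm : measure_display} {T : measurableType dm}
  {mu : measure T R} {D : set T} {h : T -> R} :
  measurable D -> mu.-integrable D (EFin \o h) ->
  (Rintegral mu D h)%:E = (\int[mu]_(x in D) (h x)%:E)%E.
Proof. by move=> mD h_int; rewrite /Rintegral fineK // integrable_fin_num. Qed.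

Lemma normr_Rintegral_sub_le {R : realType} {dm : measure_display} {T : measurableType dm}
  (P : probability T R) (f g : T -> R) (b : R) :
  P.-integrable setT (EFin \o f) -> P.-integrable setT (EFin \o g) ->
  (forall x, `|f x - g x| <= b) ->
  `|Rintegral P setT f - Rintegral P setT g| <= b.
Proof.
move=> f_int g_int fg_b; rewrite -RintegralB //.
have fg_int : P.-integrable setT (EFin \o (f \- g)).
  by apply: eq_integrable (integrableB _ f_int g_int) => // x _; rewrite /= EFinB.
apply: le_trans (le_normr_Rintegral _ fg_int) _ => //.
apply: le_trans (@le_Rintegral _ _ _ P setT _ (fun=> b) _ _ _ _) _ => //.
- exact: integrable_norm.
- exact: finite_measure_integrable_cst.
- by move=> x _; exact: fg_b.
- rewrite Rintegral_cst // (_ : fine _ = 1) ?mulr1 //.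
  exact: (congr1 fine (probability_setT P)).
Qed.

Section LipschitzOnCompact.
Context {R : realType} {dm : measure_display} {L : measurableType dm} {dL : L -> L -> R}.
Hypotheses (hL : is_metric dL) (hLc : metric_compact dL) (hLB : borel_for dL).

Lemma lipschitz_measurable {C : R} {h : L -> R} :
  0 <= C -> lipschitz_with dL C h -> measurable_fun setT h.
Proof.
move=> C_ge0 h_lip; apply: (measurability _ (RGenOInfty.measurableE R)) => //.
move=> /= _ [_ [x ->] <-]; rewrite setTI hLB; apply: sub_sigma_algebra => l /=.
rewrite in_itv /= andbT => xl.
exists ((h l - x) / (C + 1)); first by apply: divr_gt0; lra.
move=> y dy; rewrite /= in_itv /= andbT.
have : h l - h y <= C * dL l y by apply: le_trans (ler_norm _) (h_lip _ _).
have : C * dL l y <= C * ((h l - x) / (C + 1)) by rewrite ler_wpM2l // ltW.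
have : C * ((h l - x) / (C + 1)) < h l - x by rewrite mulrA ltr_pdivrMr; nra.
lra.
Qed.

Lemma lipschitz_integrable (P : probability L R) {C : R} {h : L -> R} :
  0 <= C -> lipschitz_with dL C h -> P.-integrable setT (EFin \o h).
Proof.
move=> C_ge0 h_lip; apply: measurable_bounded_integrable => //.
- exact: le_lt_trans (probability_le1 P _) (ltry _).
- exact: lipschitz_measurable h_lip.
have [B dB] := metric_compact_bounded hL hLc.
have [[l0 _]|L0] := pselect (exists _ : L, True); last first.
  by exists 0; split => // ? _ l; exfalso; apply: L0; exists l.
exists (`|h l0| + C * B); split; first exact: num_real.
move=> m /ltW + l _ /=; apply: le_trans.
rewrite -[h l](subrK (h l0)); apply: le_trans (ler_normD _ _) _.
by rewrite addrC lerD // (le_trans (h_lip _ _)) // ler_wpM2l.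
Qed.

Lemma Rintegral_sub_lipschitz_le {P Q : probability L R} {e C : R} {h : L -> R} :
  (forall g, Lip1 dL g -> (\int[P]_l (g l)%:E - \int[Q]_l (g l)%:E <= e%:E)%E) ->
  0 < C -> lipschitz_with dL C h ->
  Rintegral P setT h - Rintegral Q setT h <= C * e.
Proof.
move=> PQ_e C_gt0 h_lip.
have hC_lip : Lip1 dL (fun l => h l / C).
  move=> a b; rewrite -mulrBl normrM [`|C^-1|]gtr0_norm ?invr_gt0 // ler_pdivrMr //.
  by rewrite mulrC; exact: h_lip.
have hC_int (S : probability L R) : S.-integrable setT (EFin \o (fun l => h l / C)).
  by apply: (lipschitz_integrable _ ler01) => a b; rewrite mul1r; exact: hC_lip.
have h_int (S : probability L R) : S.-integrable setT (EFin \o h).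
  exact: lipschitz_integrable (ltW C_gt0) h_lip.
have := PQ_e _ hC_lip.
rewrite -(EFin_Rintegral measurableT (hC_int P)) -(EFin_Rintegral measurableT (hC_int Q)).
rewrite -EFinB lee_fin (RintegralZr _ measurableT (h_int P)).
rewrite (RintegralZr _ measurableT (h_int Q)) -mulrBl.
by rewrite ler_pdivrMr // mulrC.
Qed.

End LipschitzOnCompact.

Section TransferOperator.
Context {R : realType} {X : Type} {d : X -> X -> R}.
Context {dm : measure_display} {L : measurableType dm} {dL : L -> L -> R}.
Context {tau : L -> X -> X} {q : X -> probability L R} {r t : R}.
Hypotheses (hX : is_metric d).
Hypotheses (hL : is_metric dL) (hLc : metric_compact dL) (hLB : borel_for dL).
Hypotheses (hr : 0 <= r) (ht : 0 <= t).
Hypothesis tau_nonexpansive : forall l x y, d (tau l x) (tau l y) <= d x y.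
Hypothesis tau_lipschitz_param : forall l1 l2 x, d (tau l1 x) (tau l2 x) <= r * dL l1 l2.
Hypothesis q_lipschitz : forall x y (g : L -> R), Lip1 dL g ->
  (\int[q x]_l (g l)%:E - \int[q y]_l (g l)%:E <= (t * d x y)%:E)%E.

Lemma lipschitz_Bq {K : R} {g : X -> R} : 0 < K -> lipschitz_with d K g ->
  lipschitz_with d (K * (1 + (r + 1) * t)) (Bq tau q g).
Proof.
have [_ [_ [d_sym _]]] := hX; have [dL_ge0 _] := hL.
move=> K_gt0 g_lip x y.
have g_tau_lip z : lipschitz_with dL (K * (r + 1)) (fun l => g (tau l z)).
  move=> a b; apply: le_trans (g_lip _ _) _; rewrite -mulrA ler_pM2l //.
  apply: le_trans (tau_lipschitz_param a b z) _.
  by rewrite ler_wpM2r ?dL_ge0 ?lerDl.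
have Kr_gt0 : 0 < K * (r + 1) by rewrite mulr_gt0 // ltr_wpDl.
have g_tau_int z (P : probability L R) : P.-integrable setT (EFin \o (fun l => g (tau l z))).
  exact: (lipschitz_integrable hL hLc hLB P (ltW Kr_gt0) (g_tau_lip z)).
change (`|Rintegral (q x) setT (fun l => g (tau l x)) -
         Rintegral (q y) setT (fun l => g (tau l y))| <= K * (1 + (r + 1) * t) * d x y).
have same_measure : `|Rintegral (q x) setT (fun l => g (tau l x)) -
                      Rintegral (q x) setT (fun l => g (tau l y))| <= K * d x y.
  apply: normr_Rintegral_sub_le => // l.
  by apply: le_trans (g_lip _ _) _; rewrite ler_pM2l // tau_nonexpansive.
have same_integrand : `|Rintegral (q x) setT (fun l => g (tau l y)) -
                        Rintegral (q y) setT (fun l => g (tau l y))| <= K * (r + 1) * (t * d x y).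
  rewrite ler_norml; apply/andP; split.
    rewrite lerNl opprB d_sym.
    exact: (Rintegral_sub_lipschitz_le hL hLc hLB (q_lipschitz y x) Kr_gt0 (g_tau_lip y)).
  exact: (Rintegral_sub_lipschitz_le hL hLc hLB (q_lipschitz x y) Kr_gt0 (g_tau_lip y)).
have -> : K * (1 + (r + 1) * t) * d x y = K * d x y + K * (r + 1) * (t * d x y) by ring.
exact: le_trans (ler_distD _ _ _) (lerD same_measure same_integrand).
Qed.

Lemma Bq_rate_gt0 : 0 < 1 + (r + 1) * t.
Proof. by rewrite ltr_pwDl // mulr_ge0 // addr_ge0. Qed.

Lemma lipschitz_iter_Bq (n : nat) (K : R) (g : X -> R) :
  0 < K -> lipschitz_with d K g ->
  lipschitz_with d (K * (1 + (r + 1) * t) ^+ n) (iter n (Bq tau q) g).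
Proof.
move=> K_gt0 g_lip; elim: n => [|n IH]; first by rewrite expr0 mulr1.
rewrite iterS exprSr mulrA; apply: lipschitz_Bq IH.
by rewrite mulr_gt0 // exprn_gt0 // Bq_rate_gt0.
Qed.

End TransferOperator.

Theorem mainTheorem10 (R : realType) (X : Type) (d : X -> X -> R)
  (dm : measure_display) (L : measurableType dm) (dL : L -> L -> R)
  (tau : L -> X -> X) (q : X -> probability L R)
  (hX : is_metric d) (hXc : metric_compact d)
  (hL : is_metric dL) (hLc : metric_compact dL) (hLB : borel_for dL)
  (htau : jointly_continuous dL d tau)
  (hq : weakly_continuous dL d q)
  (W1 : forall l x y, d (tau l x) (tau l y) <= d x y)
  (s : R) (M : nat) (hs : 0 < s) (hM : (1 <= M)%N)
  (MP1 : forall f : X -> R, Lip1 d f -> forall x y,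
     (iter M (Cq tau q) (fun u v => (`|f u - f v|)%:E) x y <= (s * d x y)%:E)%E)
  (r : R) (hr : 0 <= r)
  (H2 : forall l1 l2 x, d (tau l1 x) (tau l2 x) <= r * dL l1 l2)
  (t : R) (ht : 0 <= t)
  (H3 : forall x y (g : L -> R), Lip1 dL g ->
     (\int[q x]_l (g l)%:E - \int[q y]_l (g l)%:E <= (t * d x y)%:E)%E) :
  exists2 c : R, 0 < c &
    forall f : X -> R, Lip1 d f -> lipschitz_with d c (iter M (Bq tau q) f).
Proof.
exists ((1 + (r + 1) * t) ^+ M); first exact: exprn_gt0 (Bq_rate_gt0 hr ht).
move=> f f_lip; rewrite -[_ ^+ M]mul1r.
apply: (lipschitz_iter_Bq hX hL hLc hLB hr ht W1 H2 H3) => // a b.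
by rewrite mul1r; exact: f_lip.
Qed.
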